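(* Let $X$ be a metric space, let $A\subseteq X$ be nonempty and let $Y$ be a hyperconvex metric space. Then for every $f\in\mathcal{N}(A,Y)$, the set $\Phi_c(f)$ of all $f'\in\mathcal{N}(X,Y)$ with $f'|_A=f$ and $f'(X)\subseteq\mathrm{cov}(f(A))$ is externally hyperconvex in $(\mathcal{N}(X,Y),d_\infty)$.
   Context: A metric space $Y$ is hyperconvex if $\bigcap_\alpha B(x_\alpha,r_\alpha)\ne\emptyset$ for every family of points $x_\alpha$ and $r_\alpha>0$ with $d(x_\alpha,x_\beta)\le r_\alpha+r_\beta$ ($B$ = closed ball). A subset $E$ of a metric space $Z$ is externally hyperconvex if for any family $\{x_\alpha\}\subseteq Z$ and reals $\{r_\alpha\}$ with $d(x_\alpha,x_\beta)\le r_\alpha+r_\beta$ and $\mathrm{dist}(x_\alpha,E)\le r_\alpha$, one has $\bigcap_\alpha B(x_\alpha,r_\alpha)\cap E\ne\emptyset$. For nonempty bounded $D\subseteq Y$, $\mathrm{cov}(D)$ is the intersection of all closed balls containing $D$. $\mathcal{N}(X,Y)$ is the set of bounded nonexpansive maps with supremum metric $d_\infty$. *)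

From mathcomp Require Import all_boot all_order all_algebra.
From mathcomp Require Import all_classical all_reals.
Set Implicit Arguments. Unset Strict Implicit. Unset Printing Implicit Defensive.
Import Order.TTheory GRing.Theory Num.Theory.
Local Open Scope classical_set_scope.
Local Open Scope ring_scope.

Section MetricDefs.
Variable R : realType.

Definition is_metric (T : Type) (d : T -> T -> R) : Prop :=
  (forall x y, 0 <= d x y) /\
  (forall x y, d x y = 0 <-> x = y) /\
  (forall x y, d x y = d y x) /\
  (forall x y z, d x z <= d x y + d y z).

Definition cball (T : Type) (d : T -> T -> R) (c : T) (r : R) : set T :=
  [set y | d c y <= r].

Definition hyperconvex (T : Type) (d : T -> T -> R) : Prop :=
  forall (I : Type) (x : I -> T) (r : I -> R),
    (forall i, 0 < r i) ->
    (forall i j, d (x i) (x j) <= r i + r j) ->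
    exists y : T, forall i, cball d (x i) (r i) y.

Definition dist_set (T : Type) (d : T -> T -> R) (z : T) (E : set T) : R :=
  inf [set d z e | e in E].

Definition ext_hyperconvex (T : Type) (d : T -> T -> R) (E : set T) : Prop :=
  forall (I : Type) (x : I -> T) (r : I -> R),
    (forall i j, d (x i) (x j) <= r i + r j) ->
    (forall i, dist_set d (x i) E <= r i) ->
    exists2 y : T, E y & forall i, cball d (x i) (r i) y.

Definition cov (T : Type) (d : T -> T -> R) (D : set T) : set T :=
  [set y | forall (c : T) (r : R), D `<=` cball d c r -> cball d c r y].

Definition nonexpansive (T U : Type) (dT : T -> T -> R) (dU : U -> U -> R)
  (f : T -> U) : Prop := forall x y, dU (f x) (f y) <= dT x y.

Definition bounded_map (T U : Type) (dU : U -> U -> R) (f : T -> U) : Prop :=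
  exists M : R, forall x y, dU (f x) (f y) <= M.

Definition Nmap (T U : Type) (dT : T -> T -> R) (dU : U -> U -> R) : Type :=
  {f : T -> U | nonexpansive dT dU f /\ bounded_map dU f}.

Definition dsup (T U : Type) (dT : T -> T -> R) (dU : U -> U -> R)
  (f g : Nmap dT dU) : R :=
  sup [set dU (proj1_sig f x) (proj1_sig g x) | x in [set: T]].

Definition sub_dist {X : Type} (dX : X -> X -> R) (A : set X)
  (a b : {x : X | A x}) : R := dX (proj1_sig a) (proj1_sig b).

Definition Phi_c (X Y : Type) (dX : X -> X -> R) (dY : Y -> Y -> R) (A : set X)
  (f : Nmap (@sub_dist X dX A) dY) : set (Nmap dX dY) :=
  [set g | (forall a : {x : X | A x}, proj1_sig g (proj1_sig a) = proj1_sig f a) /\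
           range (proj1_sig g) `<=` cov dY (range (proj1_sig f))].

End MetricDefs.

From mathcomp Require Import all_boot all_order all_algebra.
From mathcomp Require Import all_classical all_reals.
From mathcomp Require Import lra.
Local Open Scope classical_set_scope.
Local Open Scope ring_scope.
Set Implicit Arguments. Unset Strict Implicit. Unset Printing Implicit Defensive.
Import Order.TTheory GRing.Theory Num.Theory.

(* Admissible values of an extension at a new point x form an intersection
   of closed balls: around already assigned values with radius the distance to
   x, around each F_i(x) with radius r_i, and around the centre of every ball
   covering f(A).  These balls meet pairwise, so hyperconvexity of Y supplies a
   value, and Zorn's lemma yields a total nonexpansive extension g of f.  Being
   inside every covering ball, g lies in Phi_c(f); the pairwise conditions
   involving F_i hold because F_i is approximated by elements of Phi_c(f),
   which themselves lie in every covering ball and agree with f on A. *)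

Section MetricFacts.
Variables (R : realType) (T : Type) (d : T -> T -> R).
Hypothesis hd : is_metric d.

Lemma metric_ge0 x y : 0 <= d x y. Proof. exact: hd.1. Qed.

Lemma metric_eq0 x y : d x y = 0 -> x = y. Proof. exact: (hd.2.1 x y).1. Qed.

Lemma metric_xx x : d x x = 0. Proof. exact: (hd.2.1 x x).2. Qed.

Lemma metric_sym x y : d x y = d y x. Proof. exact: hd.2.2.1. Qed.

Lemma metric_triangle x y z : d x z <= d x y + d y z. Proof. exact: hd.2.2.2. Qed.

Lemma hyperconvex_ge0 : hyperconvex d ->
  forall (I : Type) (x : I -> T) (r : I -> R), (forall i, 0 <= r i) ->
  (forall i j, d (x i) (x j) <= r i + r j) ->
  exists y, forall i, d (x i) y <= r i.
Proof.
move=> hyp I x r r_ge0 r_compat.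
(* A ball of radius 0 pins the point to its centre, which lies in every ball. *)
have [[k rk0]|r_neq0] := pselect (exists k, r k = 0).
  by exists (x k) => i; have := r_compat i k; rewrite rk0 addr0.
have r_gt0 i : 0 < r i.
  by rewrite lt_neqAle r_ge0 andbT; apply/eqP => ri0; apply: r_neq0; exists i.
exact: hyp.
Qed.

End MetricFacts.

Lemma dist_set_approx (R : realType) (T : Type) (d : T -> T -> R) z (E : set T) r eps :
  E !=set0 -> dist_set d z E <= r -> 0 < eps -> exists2 e, E e & d z e < r + eps.
Proof.
move=> [e0 Ee0] zE_le eps_gt0.
have /inf_lt[] : dist_set d z E < r + eps by rewrite /dist_set; lra.
  by exists (d z e0); exists e0.
by move=> _ [e Ee <-]; exists e.
Qed.

Section SupMetric.
Variables (R : realType) (X Y : Type) (dX : X -> X -> R) (dY : Y -> Y -> R).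
Hypothesis hY : is_metric dY.

Lemma dsup_ub (g h : Nmap dX dY) x : dY (sval g x) (sval h x) <= dsup g h.
Proof.
case: g => g [g_ne [Mg g_bd]]; case: h => h [h_ne [Mh h_bd]]; rewrite /dsup /=.
apply: sup_upper_bound; last by exists x.
split; first by exists (dY (g x) (h x)); exists x.
exists (Mg + dY (g x) (h x) + Mh) => _ [t _ <-].
have := metric_triangle hY (g t) (g x) (h t).
have := metric_triangle hY (g x) (h x) (h t).
have := g_bd t x; have := h_bd x t; lra.
Qed.

Lemma ge_dsup (g h : Nmap dX dY) r (x0 : X) :
  (forall x, dY (sval g x) (sval h x) <= r) -> dsup g h <= r.
Proof.
move=> gh_le; apply: ge_sup; first by exists (dY (sval g x0) (sval h x0)); exists x0.
by move=> _ [x _ <-].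
Qed.

End SupMetric.

Section ExtensionWithinBalls.
Variables (R : realType) (X Y : Type) (dX : X -> X -> R) (dY : Y -> Y -> R).
Hypotheses (hX : is_metric dX) (hY : is_metric dY) (hYh : hyperconvex dY).
Variables (K : Type) (c : K -> X -> Y) (r : K -> R).
Hypothesis c_ne : forall k, nonexpansive dX dY (c k).
Hypothesis c_compat : forall k k' x, dY (c k x) (c k' x) <= r k + r k'.

(* Partial maps are encoded by their graphs; nonexpansiveness on the graph
   already makes it functional. *)
Definition admissible_graph (G : set (X * Y)) :=
  (forall p, G p -> forall k, dY (c k p.1) p.2 <= r k) /\
  (forall p q, G p -> G q -> dY p.2 q.2 <= dX p.1 q.1).

Lemma admissible_graph_setU1 G x :
  admissible_graph G -> exists y, admissible_graph (G `|` [set (x, y)]).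
Proof.
move=> [G_ball G_ne].
pose centre (j : {p | G p} + K) :=
  match j with inl p => (sval p).2 | inr k => c k x end.
pose radius (j : {p | G p} + K) :=
  match j with inl p => dX (sval p).1 x | inr k => r k end.
have [y y_in] : exists y, forall j, dY (centre j) y <= radius j.
  apply: hyperconvex_ge0 => //.
    case=> [p|k] /=; first exact: metric_ge0.
    by have := c_compat k k x; rewrite metric_xx //; lra.
  have ball_shift p k : G p -> dY p.2 (c k x) <= dX p.1 x + r k.
    move=> Gp; have := metric_triangle hY p.2 (c k p.1) (c k x).
    have := G_ball p Gp k; have := c_ne k p.1 x.
    have := metric_sym hY p.2 (c k p.1); lra.
  case=> [[p Gp]|k] [[q Gq]|k'] /=.
  - apply: le_trans (G_ne p q Gp Gq) _.
    by rewrite (metric_sym hX q.1); exact: metric_triangle.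
  - exact: ball_shift.
  - by rewrite metric_sym // addrC; exact: ball_shift.
  - exact: c_compat.
exists y; split.
  by move=> p [Gp|->] k; [exact: G_ball | exact: (y_in (inr k))].
move=> p q [Gp|->] [Gq|->] /=.
- exact: G_ne.
- exact: (y_in (inl (exist _ p Gp))).
- by rewrite metric_sym // (metric_sym hX); exact: (y_in (inl (exist _ q Gq))).
- by rewrite !metric_xx.
Qed.

(* The base graph G0 stays outside the chain, so the empty chain is harmless. *)
Lemma admissible_graph_bigcup G0 (F : set (set (X * Y))) :
  admissible_graph G0 -> F `<=` (fun G => admissible_graph (G0 `|` G)) ->
  total_on F subset -> admissible_graph (G0 `|` \bigcup_(G in F) G).
Proof.
move=> G0_adm F_adm F_chain; split.
  move=> p [G0p|[G FG Gp]]; first exact: G0_adm.1.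
  by apply: (F_adm G FG).1; right.
move=> p q p_in q_in.
suff [G' G'_adm [G'p G'q]] : exists2 G', admissible_graph G' & G' p /\ G' q.
  exact: G'_adm.2.
case: p_in => [G0p|[G FG Gp]]; case: q_in => [G0q|[G' FG' G'q]].
- by exists G0.
- by exists (G0 `|` G'); [exact: F_adm | split; [left|right]].
- by exists (G0 `|` G); [exact: F_adm | split; [right|left]].
- have [GG'|G'G] := F_chain G G' FG FG'.
    by exists (G0 `|` G'); [exact: F_adm | split; right => //; exact: GG'].
  by exists (G0 `|` G); [exact: F_adm | split; right => //; exact: G'G].
Qed.

Lemma admissible_graph_total G0 : admissible_graph G0 ->
  exists g : X -> Y, [/\ forall p, G0 p -> g p.1 = p.2,
    nonexpansive dX dY g & forall x k, dY (c k x) (g x) <= r k].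
Proof.
move=> G0_adm.
have [M [M_adm M_max]] := Zorn_bigcup (fun F => @admissible_graph_bigcup G0 F G0_adm).
have M_total x : exists y, (G0 `|` M) (x, y).
  apply: contrapT => x_free.
  have [y xy_adm] := admissible_graph_setU1 x M_adm.
  apply: (M_max (M `|` [set (x, y)])); last by rewrite setUA.
  split; first exact: subsetUl.
  by move=> /(_ (x, y) (or_intror erefl)) xy_in; apply: x_free; exists y; right.
pose g x := projT1 (cid (M_total x)).
have g_graph x : (G0 `|` M) (x, g x) by rewrite /g; case: cid.
exists g; split.
- move=> p G0p; apply: (metric_eq0 hY); apply/eqP; rewrite eq_le metric_ge0 // andbT.
  rewrite -(metric_xx hX p.1).
  by apply: (M_adm.2 (p.1, g p.1)) => //; left; case: p G0p.
- by move=> x x'; exact: (M_adm.2 (x, g x) (x', g x')).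
- by move=> x k; exact: (M_adm.1 (x, g x)).
Qed.

End ExtensionWithinBalls.

Section CoveringBalls.
Variables (R : realType) (Y : Type) (dY : Y -> Y -> R).
Hypothesis hY : is_metric dY.

Definition covering_ball (D : set Y) := {b : Y * R | D `<=` cball dY b.1 b.2}.

Lemma covP (D : set Y) y :
  cov dY D y <-> forall b : covering_ball D, dY (sval b).1 y <= (sval b).2.
Proof.
split=> [y_in [[c s] Dcs]|y_in c s Dcs]; first exact: y_in.
exact: (y_in (exist _ (c, s) Dcs)).
Qed.

Lemma covering_ball_compat (D : set Y) : D !=set0 ->
  forall b b' : covering_ball D, dY (sval b).1 (sval b').1 <= (sval b).2 + (sval b').2.
Proof.
move=> [z Dz] [[c s] Dcs] [[c' s'] Dcs'] /=.
have := Dcs z Dz; have := Dcs' z Dz; rewrite /cball /=.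
have := metric_triangle hY c z c'; have := metric_sym hY z c'; lra.
Qed.

End CoveringBalls.

Section ExtensionsOfF.
Variables (R : realType) (X Y : Type) (dX : X -> X -> R) (dY : Y -> Y -> R).
Hypotheses (hX : is_metric dX) (hY : is_metric dY) (hYh : hyperconvex dY).
Variables (A : set X) (f : Nmap (@sub_dist R X dX A) dY).
Hypothesis hA : A !=set0.

Lemma extension_within_balls (K : Type) (c : K -> X -> Y) (r : K -> R) :
  (forall k, nonexpansive dX dY (c k)) ->
  (forall k k' x, dY (c k x) (c k' x) <= r k + r k') ->
  (forall a k, dY (c k (sval a)) (sval f a) <= r k) ->
  exists g : X -> Y, [/\ forall a, g (sval a) = sval f a,
    nonexpansive dX dY g & forall x k, dY (c k x) (g x) <= r k].
Proof.
move=> c_ne c_compat f_ball.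
pose graph_f := [set (sval a, sval f a) | a in [set: {x | A x}]].
have graph_f_adm : admissible_graph dX dY c r graph_f.
  split; first by move=> _ [a _ <-]; exact: f_ball.
  by move=> _ _ [a _ <-] [b _ <-]; exact: (proj1 (svalP f)).
have [g [g_f g_ne g_ball]] := admissible_graph_total hX hY hYh c_ne c_compat graph_f_adm.
by exists g; split=> // a; apply: (g_f (sval a, sval f a)); exists a.
Qed.

Lemma Phi_c_extension (g : X -> Y) :
  (forall a, g (sval a) = sval f a) -> nonexpansive dX dY g ->
  range g `<=` cov dY (range (sval f)) -> exists2 h, Phi_c f h & sval h = g.
Proof.
move=> g_f g_ne g_cov.
have [M f_bd] := proj2 (svalP f).
have [x0 Ax0] := hA; pose a0 : {x | A x} := exist _ x0 Ax0.
have g_near x : dY (sval f a0) (g x) <= M.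
  have /covP g_in := g_cov _ (imageT g x).
  have f_in : range (sval f) `<=` cball dY (sval f a0) M by move=> _ [a _ <-]; exact: f_bd.
  exact: (g_in (exist _ (sval f a0, M) f_in)).
have g_bd : bounded_map dY g.
  exists (M + M) => x x'; have := g_near x; have := g_near x'.
  have := metric_triangle hY (g x) (sval f a0) (g x').
  have := metric_sym hY (g x) (sval f a0); lra.
by exists (exist _ g (conj g_ne g_bd)).
Qed.

Lemma range_f_neq0 : range (sval f) !=set0.
Proof. by have [x0 Ax0] := hA; exists (sval f (exist _ x0 Ax0)); exists (exist _ x0 Ax0). Qed.

Lemma Phi_c_neq0 : Phi_c f !=set0.
Proof.
pose c (b : covering_ball dY (range (sval f))) (_ : X) := (sval b).1.
have [|||g [g_f g_ne g_ball]] :=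
  extension_within_balls (c := c) (r := fun b => (sval b).2).
- by move=> b x x'; rewrite /c (metric_xx hY); exact: metric_ge0.
- by move=> b b' x; exact/covering_ball_compat/range_f_neq0.
- by move=> a [[c0 s] Dcs] /=; apply: Dcs; exists a.
have [|h Ph _] := Phi_c_extension g_f g_ne.
  by move=> _ [x _ <-]; apply/covP => b; exact: g_ball.
by exists h.
Qed.

Section NearPhi_c.
Variables (F : Nmap dX dY) (r : R).
Hypothesis F_near : dist_set (@dsup R X Y dX dY) F (Phi_c f) <= r.

Lemma Phi_c_approx eps : 0 < eps ->
  exists2 h, Phi_c f h & forall x, dY (sval F x) (sval h x) <= r + eps.
Proof.
move=> eps_gt0; have [h Ph Fh] := dist_set_approx Phi_c_neq0 F_near eps_gt0.
by exists h => // x; apply: le_trans (dsup_ub hY F h x) (ltW Fh).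
Qed.

Lemma covering_ball_near_Phi_c (b : covering_ball dY (range (sval f))) x :
  dY (sval b).1 (sval F x) <= (sval b).2 + r.
Proof.
apply/ler_addgt0Pr => eps eps_gt0; have [h [_ h_cov] Fh] := Phi_c_approx eps_gt0.
have /covP h_in := h_cov _ (imageT (sval h) x).
have := h_in b; have := Fh x.
have := metric_triangle hY (sval b).1 (sval h x) (sval F x).
have := metric_sym hY (sval h x) (sval F x); lra.
Qed.

Lemma near_Phi_c_on_A a : dY (sval F (sval a)) (sval f a) <= r.
Proof.
apply/ler_addgt0Pr => eps eps_gt0; have [h [h_f _] Fh] := Phi_c_approx eps_gt0.
by rewrite -h_f; exact: Fh.
Qed.

End NearPhi_c.

End ExtensionsOfF.

Theorem lemma5p12 (R : realType) (X Y : Type)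
  (dX : X -> X -> R) (dY : Y -> Y -> R)
  (hX : is_metric dX) (hY : is_metric dY)
  (A : set X) (hA : A !=set0)
  (hYh : hyperconvex dY)
  (f : Nmap (@sub_dist R X dX A) dY) :
  ext_hyperconvex (@dsup R X Y dX dY) (Phi_c f).
Proof.
move=> I F r F_compat F_near.
pose c (k : I + covering_ball dY (range (sval f))) x :=
  match k with inl i => sval (F i) x | inr b => (sval b).1 end.
pose s (k : I + covering_ball dY (range (sval f))) :=
  match k with inl i => r i | inr b => (sval b).2 end.
have [||| g [g_f g_ne g_ball]] := extension_within_balls hX hY hYh (f := f) (c := c) (r := s).
- case=> [i|b] x x' /=; first exact: (proj1 (svalP (F i))).
  by rewrite (metric_xx hY); exact: metric_ge0.
- case=> [i|b] [j|b'] x /=.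
  + exact: le_trans (dsup_ub hY (F i) (F j) x) (F_compat i j).
  + by rewrite metric_sym // addrC; exact: covering_ball_near_Phi_c.
  + exact: covering_ball_near_Phi_c.
  + exact/covering_ball_compat/range_f_neq0.
- move=> a [i|[[c0 s0] Dcs]] /=; first exact: near_Phi_c_on_A.
  by apply: Dcs; exists a.
have [|h Ph hg] := Phi_c_extension hY hA g_f g_ne.
  by move=> _ [x _ <-]; apply/covP => b; exact: (g_ball x (inr b)).
exists h => // i; have [x0 _] := hA.
by apply: ge_dsup x0 _ => x; rewrite hg; exact: (g_ball x (inl i)).
Qed.
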